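(* For every positive integer $m$ and every complex number $\alpha \neq 0$, $$\sum_{k=1}^m H_k\, k^\alpha = \sum_{j=1}^m j!\, S(\alpha, j) \binom{m+1}{j+1} \left(H_{m+1} - \frac{1}{j+1}\right).$$
   Context: For a complex number $\alpha \neq 0$ and a positive integer $k$, the Stirling function of the second kind is $$S(\alpha, k) = \frac{1}{k!} \sum_{j=1}^k (-1)^{k-j} \binom{k}{j} j^\alpha,$$ where for a positive integer $j$, $j^\alpha = e^{\alpha \ln j}$ with $\ln j$ the real logarithm. $H_k = 1 + \frac12 + \cdots + \frac1k$ denotes the $k$-th harmonic number. *)

From Stdlib Require Import Reals Factorial.
Open Scope R_scope.

(* Complex numbers, represented as (real part, imaginary part). *)
Definition Cx : Type := (R * R)%type.
Definition Cx0 : Cx := (0, 0).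
Definition Cxadd (z w : Cx) : Cx := (fst z + fst w, snd z + snd w).
Definition Cxscale (r : R) (z : Cx) : Cx := (r * fst z, r * snd z).

Fixpoint Cxsum1 (n : nat) (f : nat -> Cx) : Cx :=
  match n with
  | O => Cx0
  | S n' => Cxadd (Cxsum1 n' f) (f (S n'))
  end.

(* For a positive integer j, j^alpha = e^(alpha ln j) with ln j real:
   e^((a+ib) ln j) = e^(a ln j) (cos (b ln j) + i sin (b ln j)). *)
Definition cpow_nat (j : nat) (alpha : Cx) : Cx :=
  let l := ln (INR j) in
  (exp (fst alpha * l) * cos (snd alpha * l),
   exp (fst alpha * l) * sin (snd alpha * l)).

Fixpoint harmonic (k : nat) : R :=
  match k with
  | O => 0
  | S k' => harmonic k' + / INR (S k')
  end.

Definition stirling2 (alpha : Cx) (k : nat) : Cx :=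
  Cxscale (/ INR (Factorial.fact k))
    (Cxsum1 k (fun j => Cxscale ((-1) ^ (k - j) * C k j) (cpow_nat j alpha))).

(* Since j! S(a,j) = sum_{i=1}^j (-1)^(j-i) C(j,i) i^a, the identity is real-linear in
   the sequence k |-> k^a, so it suffices to prove it componentwise for an arbitrary real
   sequence f.  Writing  T f j = sum_{i=1}^j (-1)^(j-i) C(j,i) f(i)  (the j-th forward
   difference at 0 of f, once f(0) is set to 0), the proof has three ingredients:
   1. Newton's forward-difference formula  f(n+k) = sum_j C(k,j) Delta^j f(n), together with
      the explicit form of Delta^j; for n = 0 this is the binomial inversion
      f(k) = sum_{j=1}^k C(k,j) T f j.
   2. The coefficient recursion
      C(n+1,j+1)(H_{n+1} - 1/(j+1)) = C(n,j+1)(H_n - 1/(j+1)) + H_n C(n,j),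
      i.e. the partial sums of C(k,j) H_k over k <= n.
   3. An induction on m combining 1 and 2, giving the real identity; the complex theorem
      follows by applying it to the real and imaginary parts. *)

From Stdlib Require Import Reals Factorial Lra Lia.
Open Scope R_scope.

Lemma C_n_0 (n : nat) : C n 0 = 1.
Proof. unfold C. rewrite Nat.sub_0_r. simpl. field. apply INR_fact_neq_0. Qed.

Lemma C_n_n (n : nat) : C n n = 1.
Proof. unfold C. rewrite Nat.sub_diag. simpl. field. apply INR_fact_neq_0. Qed.

Lemma C_succ_ratio (n j : nat) :
  (j < n)%nat -> C n (S j) * INR (S j) = C n j * INR (n - j).
Proof.
  intro Hjn. unfold C. replace (n - j)%nat with (S (n - S j)) by lia.
  set (d := (n - S j)%nat). rewrite !fact_simpl, !mult_INR.
  pose proof (INR_fact_neq_0 j). pose proof (INR_fact_neq_0 d).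
  pose proof (INR_fact_neq_0 n).
  assert (INR (S j) <> 0) by (apply not_0_INR; lia).
  assert (INR (S d) <> 0) by (apply not_0_INR; lia).
  field. auto.
Qed.

(* Pascal's rule applied termwise to a binomial sum. *)
Lemma binomial_sum_pascal (k : nat) (b : nat -> R) :
  sum_f_R0 (fun i => C (S k) i * b i) (S k) =
  sum_f_R0 (fun i => C k i * b i) k + sum_f_R0 (fun i => C k i * b (S i)) k.
Proof.
  destruct k as [|k].
  - simpl. rewrite !C_n_0, C_n_n. ring.
  - rewrite (decomp_sum _ (S (S k))) by lia. simpl pred. rewrite tech5.
    rewrite (sum_eq (fun i => C (S (S k)) (S i) * b (S i))
                    (fun i => C (S k) i * b (S i) + C (S k) (S i) * b (S i))).
    2:{ intros i Hi. rewrite <- pascal by lia. ring. }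
    rewrite plus_sum, (decomp_sum (fun i => C (S k) i * b i) (S k)) by lia.
    simpl pred. rewrite (tech5 (fun i => C (S k) i * b (S i)) k), !C_n_0, !C_n_n.
    ring.
Qed.

Fixpoint fdiff (j : nat) (f : nat -> R) : nat -> R :=
  match j with
  | O => f
  | S j' => fun n => fdiff j' f (S n) - fdiff j' f n
  end.

Lemma newton_forward (k : nat) :
  forall (f : nat -> R) (n : nat),
  f (n + k)%nat = sum_f_R0 (fun j => C k j * fdiff j f n) k.
Proof.
  induction k as [|k IH]; intros f n.
  - simpl. rewrite C_n_0, Nat.add_0_r. ring.
  - replace (n + S k)%nat with (S n + k)%nat by lia.
    rewrite IH, binomial_sum_pascal, <- plus_sum.
    apply sum_eq. intros i _. simpl. ring.
Qed.

Lemma fdiff_explicit (j : nat) :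
  forall (f : nat -> R) (n : nat),
  fdiff j f n = sum_f_R0 (fun i => (-1) ^ (j - i) * C j i * f (n + i)%nat) j.
Proof.
  induction j as [|j IH]; intros f n.
  - simpl. rewrite C_n_0, Nat.add_0_r. ring.
  - simpl fdiff. rewrite !IH.
    rewrite (sum_eq (fun i => (-1) ^ (S j - i) * C (S j) i * f (n + i)%nat)
                    (fun i => C (S j) i * ((-1) ^ (S j - i) * f (n + i)%nat)))
      by (intros; ring).
    rewrite binomial_sum_pascal.
    rewrite (sum_eq (fun i => C j i * ((-1) ^ (S j - i) * f (n + i)%nat))
                    (fun i => (-1) ^ (j - i) * C j i * f (n + i)%nat * (-1))).
    2:{ intros i Hi. rewrite Nat.sub_succ_l by lia. simpl pow. ring. }
    rewrite (sum_eq (fun i => C j i * ((-1) ^ (S j - S i) * f (n + S i)%nat))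
                    (fun i => (-1) ^ (j - i) * C j i * f (S n + i)%nat)).
    2:{ intros i Hi. simpl Nat.sub. replace (n + S i)%nat with (S n + i)%nat by lia. ring. }
    rewrite <- scal_sum. ring.
Qed.

Fixpoint sum1 (n : nat) (f : nat -> R) : R :=
  match n with
  | O => 0
  | S n' => sum1 n' f + f (S n')
  end.

Lemma sum1_ext (n : nat) (f g : nat -> R) :
  (forall k, (1 <= k <= n)%nat -> f k = g k) -> sum1 n f = sum1 n g.
Proof.
  induction n as [|n IH]; intros Hfg; simpl; auto.
  rewrite IH by (intros; apply Hfg; lia). rewrite Hfg by lia. reflexivity.
Qed.

Lemma sum1_plus (n : nat) (f g : nat -> R) :
  sum1 n (fun k => f k + g k) = sum1 n f + sum1 n g.
Proof. induction n as [|n IH]; simpl; [ring | rewrite IH; ring]. Qed.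

Lemma sum1_scal (n : nat) (c : R) (f : nat -> R) :
  sum1 n (fun k => c * f k) = c * sum1 n f.
Proof. induction n as [|n IH]; simpl; [ring | rewrite IH; ring]. Qed.

Lemma sum1_sum_f_R0 (n : nat) (f : nat -> R) : sum1 n f = sum_f_R0 f n - f 0%nat.
Proof. induction n as [|n IH]; simpl; [ring | rewrite IH; ring]. Qed.

Lemma linear_Cxsum1 (p : Cx -> R) (n : nat) (F : nat -> Cx) :
  p Cx0 = 0 -> (forall z w, p (Cxadd z w) = p z + p w) ->
  p (Cxsum1 n F) = sum1 n (fun k => p (F k)).
Proof.
  intros Hp0 Hpadd. induction n as [|n IH]; simpl; [exact Hp0 |].
  rewrite Hpadd, IH. reflexivity.
Qed.

(* T f j = sum_{i=1}^j (-1)^(j-i) C(j,i) f(i); for f = (k |-> k^a) this is j! S(a,j). *)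
Definition binom_transform (f : nat -> R) (j : nat) : R :=
  sum1 j (fun i => (-1) ^ (j - i) * C j i * f i).

Lemma binom_transform_ext (f g : nat -> R) (j : nat) :
  (forall i, (1 <= i)%nat -> f i = g i) -> binom_transform f j = binom_transform g j.
Proof.
  intros Hfg. apply sum1_ext. intros i Hi. rewrite Hfg by lia. reflexivity.
Qed.

(* Binomial inversion: Newton's formula at 0 for a sequence vanishing at 0. *)
Lemma binomial_inversion (f : nat -> R) (k : nat) :
  f 0%nat = 0 -> f k = sum1 k (fun j => C k j * binom_transform f j).
Proof.
  intros Hf0. change (f k) with (f (0 + k)%nat).
  rewrite sum1_sum_f_R0, (newton_forward k f 0).
  change (binom_transform f 0) with 0. rewrite Rmult_0_r, Rminus_0_r.
  apply sum_eq. intros j _. unfold binom_transform.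
  rewrite fdiff_explicit, sum1_sum_f_R0, Hf0. simpl Nat.add. ring.
Qed.

Lemma harmonic_coeff_step (n j : nat) :
  (j < n)%nat ->
  C (S n) (S j) * (harmonic (S n) - / INR (S j)) =
  C n (S j) * (harmonic n - / INR (S j)) + harmonic n * C n j.
Proof.
  intros Hjn. rewrite <- pascal by lia.
  change (harmonic (S n)) with (harmonic n + / INR (S n)).
  pose proof (C_succ_ratio n j Hjn) as Hratio.
  rewrite minus_INR, S_INR in Hratio by lia. rewrite !S_INR.
  pose proof (pos_INR j). pose proof (pos_INR n).
  replace (C n (S j)) with (C n j * (INR n - INR j) / (INR j + 1))
    by (rewrite <- Hratio; field; lra).
  field. lra.
Qed.

Lemma weighted_harmonic_sum_0 (f : nat -> R) (m : nat) :
  f 0%nat = 0 ->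
  sum1 m (fun k => harmonic k * f k) =
  sum1 m (fun j => C (S m) (S j) * (harmonic (S m) - / INR (S j)) * binom_transform f j).
Proof.
  intros Hf0. induction m as [|m IH]; [reflexivity |].
  change (sum1 (S m) ?g) with (sum1 m g + g (S m)).
  rewrite IH, (binomial_inversion f (S m) Hf0).
  rewrite (sum1_ext m
     (fun j => C (S (S m)) (S j) * (harmonic (S (S m)) - / INR (S j)) * binom_transform f j)
     (fun j => C (S m) (S j) * (harmonic (S m) - / INR (S j)) * binom_transform f j
               + harmonic (S m) * (C (S m) j * binom_transform f j))).
  2:{ intros j Hj. rewrite harmonic_coeff_step by lia. ring. }
  change (harmonic (S (S m))) with (harmonic (S m) + / INR (S (S m))).
  rewrite sum1_plus, sum1_scal. simpl sum1. rewrite !C_n_n. ring.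
Qed.

(* The real identity for an arbitrary sequence: both sides ignore f 0. *)
Lemma weighted_harmonic_sum (f : nat -> R) (m : nat) :
  sum1 m (fun k => harmonic k * f k) =
  sum1 m (fun j => C (S m) (S j) * (harmonic (S m) - / INR (S j)) * binom_transform f j).
Proof.
  set (f0 := fun k => match k with O => 0 | S _ => f k end).
  assert (Hagree : forall k, (1 <= k)%nat -> f k = f0 k)
    by (intros [|k] Hk; [lia | reflexivity]).
  rewrite (sum1_ext m _ (fun k => harmonic k * f0 k))
    by (intros k Hk; rewrite Hagree by lia; reflexivity).
  rewrite (weighted_harmonic_sum_0 f0 m eq_refl).
  apply sum1_ext. intros j _. rewrite (binom_transform_ext f f0 j Hagree). reflexivity.
Qed.

Lemma proposition4_linear (p : Cx -> R) (m : nat) (alpha : Cx) :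
  p Cx0 = 0 -> (forall z w, p (Cxadd z w) = p z + p w) ->
  (forall r z, p (Cxscale r z) = r * p z) ->
  p (Cxsum1 m (fun k => Cxscale (harmonic k) (cpow_nat k alpha))) =
  p (Cxsum1 m (fun j =>
       Cxscale (C (m + 1) (j + 1) * (harmonic (m + 1) - / INR (j + 1)))
         (Cxscale (INR (Factorial.fact j)) (stirling2 alpha j)))).
Proof.
  intros Hp0 Hpadd Hpscale. rewrite !linear_Cxsum1 by assumption.
  rewrite (sum1_ext m _ (fun k => harmonic k * p (cpow_nat k alpha)))
    by (intros; apply Hpscale).
  rewrite weighted_harmonic_sum, Nat.add_1_r.
  apply sum1_ext. intros j _.
  unfold stirling2, binom_transform. rewrite !Hpscale, linear_Cxsum1 by assumption.
  rewrite (sum1_ext j (fun i => p (Cxscale ((-1) ^ (j - i) * C j i) (cpow_nat i alpha)))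
                      (fun i => (-1) ^ (j - i) * C j i * p (cpow_nat i alpha)))
    by (intros; apply Hpscale).
  rewrite !Nat.add_1_r, <- (Rmult_assoc (INR (fact j))), Rinv_r, Rmult_1_l
    by apply INR_fact_neq_0.
  reflexivity.
Qed.

Theorem proposition4 (m : nat) (alpha : Cx) :
  (1 <= m)%nat -> alpha <> Cx0 ->
  Cxsum1 m (fun k => Cxscale (harmonic k) (cpow_nat k alpha)) =
  Cxsum1 m (fun j =>
    Cxscale (C (m + 1) (j + 1) * (harmonic (m + 1) - / INR (j + 1)))
      (Cxscale (INR (Factorial.fact j)) (stirling2 alpha j))).
Proof.
  intros _ _. apply injective_projections.
  -
    apply proposition4_linear; reflexivity.
  -
    apply proposition4_linear; reflexivity.
Qed.
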